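(* Let $(M,K,\Sigma,\underline{f},V)$ and $(M',K',\Sigma',\underline{f}',V')$ be $\mathbb{Q}$SK-systems, $\xi:\mathcal{A}(K)\to\mathcal{A}(K')$ an isomorphism preserving the Blanchfield form, and $\underline b=(b_i)_{1\le i\le2g}$, $\underline b'=(b'_i)_{1\le i\le 2g}$ generating families of $\mathcal{A}(K)$, $\mathcal{A}(K')$ associated with $V$, $V'$. If $V$ and $V'$ are invertible, then $\underline b$ and $\underline b'$ are $\mathbb{Q}$-bases of $\mathcal{A}(K)$ and $\mathcal{A}(K')$, and the matrix $P$ of $\xi$ in these bases (i.e. $\xi(b_i)=\sum_kP_{ki}b'_k$) is symplectic and satisfies $V'=PVP^t$.
   Context: $\mathbb{Q}$SK-pair $(M,K)$: a rational homology 3-sphere $M$ and a knot $K$ trivial in $H_1(M;\mathbb{Z})$. $\tilde X$: the infinite cyclic covering of the exterior of $K$, deck generator $\tau$ acting as $t$; $\mathcal{A}(K)=H_1(\tilde X;\mathbb{Q})$. Blanchfield form $\phi_K([J_1],[J_2])=lk_e(J_1,J_2)\bmod\mathbb{Q}[t^{\pm1}]$, $lk_e(J_1,J_2)=\frac{1}{\delta(t)\delta(t^{-1})}\sum_k lk(\delta(\tau)J_1,\tau^k(\delta(\tau)J_2))t^k$ ($J_1\cap\tau^kJ_2=\emptyset$, $\delta$ the annihilator). Preserving: $\phi_{K'}(\xi a,\xi b)=\phi_K(a,b)$. $J$: $2g\times2g$ block-diagonal with blocks $\begin{pmatrix}0&-1\\1&0\end{pmatrix}$; $P$ symplectic means $PJP^t=J$.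 $\mathbb{Q}$SK-system $(M,K,\Sigma,\underline f,V)$: Seifert surface $\Sigma$ of genus $g$, basis $(f_i)$ of $H_1(\Sigma;\mathbb{Z})$ with intersection matrix $-J$, $V_{ij}=lk(f_i,f_j^+)$, so $V-V^t=J$. Associated generators $(b_i)$: lifts to $\tilde X$ (in one copy of $M\setminus\Sigma$) of meridians of the $f_i$; they generate $\mathcal{A}(K)$ subject to relations $\sum_i(tV-V^t)_{ij}b_i$, and $\phi_K(b_i,b_k)=(1-t)((tV-V^t)^{-1})_{ki}\bmod\mathbb{Q}[t^{\pm1}]$. *)

From HB Require Import structures.
From mathcomp Require Import all_boot all_order all_algebra.
From mathcomp Require Import fraction.
Import FracField.
Set Implicit Arguments. Unset Strict Implicit. Unset Printing Implicit Defensive.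
Import Order.TTheory GRing.Theory Num.Theory.
Local Open Scope ring_scope.

(* Field of fractions Q(t) of Q[t]; Q[t^{+-1}] sits inside it. *)
Notation Qt := {fraction {poly rat}}.
Definition polyF (p : {poly rat}) : Qt := tofrac p.
Definition tF : Qt := polyF 'X.
Definition ratF (r : rat) : Qt := polyF r%:P.

Definition isLaurent (x : Qt) : Prop :=
  exists (p : {poly rat}) (n : nat), x = polyF p / polyF ('X^n).

Definition eqmodL (x y : Qt) : Prop := isLaurent (x - y).

(* the 2g x 2g block-diagonal matrix with blocks [[0,-1],[1,0]] *)
Definition Jmx (g : nat) : 'M[rat]_(2 * g) :=
  \matrix_(i, j)
    if ~~ odd i && (nat_of_ord j == (nat_of_ord i).+1) then -1
    else if odd i && ((nat_of_ord j).+1 == nat_of_ord i) then 1 else 0.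

Definition symplectic (g : nat) (P : 'M[rat]_(2 * g)) : Prop :=
  P *m Jmx g *m P^T = Jmx g.

Definition peval (A : lmodType rat) (t : A -> A) (p : {poly rat}) (a : A) : A :=
  \sum_(i < size p) p`_i *: iter i t a.

(* The Q[t^{+-1}]-module (A, t) (t invertible with inverse tinv) is generated by
   b_1..b_2g subject exactly to the relations sum_i (tV - V^t)_{ij} b_i (j = 1..2g). *)
Definition alex_presentation (g : nat) (V : 'M[rat]_(2 * g))
    (A : lmodType rat) (t : {linear A -> A}) (tinv : A -> A) (b : 'I_(2 * g) -> A) : Prop :=
  [/\ (forall a, t (tinv a) = a), (forall a, tinv (t a) = a),
      (forall a, exists (c : 'I_(2 * g) -> {poly rat}) (n : nat),
          a = iter n tinv (\sum_i peval t (c i) (b i))) &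
      (forall c : 'I_(2 * g) -> {poly rat},
          \sum_i peval t (c i) (b i) = 0 <->
          exists (m : nat) (d : 'I_(2 * g) -> {poly rat}),
            forall i, 'X^m * c i = \sum_j (V i j *: 'X - (V j i)%:P) * d j)].

Definition seifert_presF (g : nat) (V : 'M[rat]_(2 * g)) : 'M[Qt]_(2 * g) :=
  \matrix_(i, j) (tF * ratF (V i j) - ratF (V j i)).

(* phi is a Blanchfield-type form (values in Q(t)/Q[t^{+-1}]) on (A,t):
   sesquilinear (Q-bilinear, phi(ta,c) = t phi(a,c), phi(a,tc) = t^-1 phi(a,c))
   modulo Q[t^{+-1}], with phi(b_i,b_k) = (1-t)((tV-V^t)^{-1})_{ki}. *)
Definition blanchfield_on_gens (g : nat) (V : 'M[rat]_(2 * g))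
    (A : lmodType rat) (t : {linear A -> A}) (b : 'I_(2 * g) -> A)
    (phi : A -> A -> Qt) : Prop :=
  [/\ (forall a1 a2 c, eqmodL (phi (a1 + a2) c) (phi a1 c + phi a2 c)),
      (forall r a c, eqmodL (phi (r *: a) c) (ratF r * phi a c)) &
      (forall a c, eqmodL (phi (t a) c) (tF * phi a c))] /\
  [/\ (forall a c1 c2, eqmodL (phi a (c1 + c2)) (phi a c1 + phi a c2)),
      (forall r a c, eqmodL (phi a (r *: c)) (ratF r * phi a c)),
      (forall a c, eqmodL (phi a (t c)) (tF^-1 * phi a c)) &
      (forall i k, eqmodL (phi (b i) (b k))
                          ((1 - tF) * invmx (seifert_presF V) k i))].

Definition is_Qbasis (A : lmodType rat) (n : nat) (b : 'I_n -> A) : Prop :=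
  (forall c : 'I_n -> rat, \sum_i c i *: b i = 0 -> forall i, c i = 0) /\
  (forall a, exists c : 'I_n -> rat, a = \sum_i c i *: b i).

From HB Require Import structures.
From mathcomp Require Import all_boot all_order all_algebra fraction ring.
Import GRing.Theory.
Local Open Scope ring_scope.
Set Implicit Arguments. Unset Strict Implicit.

(* Put T = V^T V^-1 (the monodromy).  The j-th presentation relation reads
   sum_i V_ij t(b_i) = sum_i V_ji b_i, so t acts on the generators through T.
   As tV - V^T = (tI - T) V and chi_T is prime to t^m, no nonzero rational
   relation among the b_i can hold, while invertibility of t and T shows that
   the b_i span over Q: they form a Q-basis.  If P is the matrix of xi, then
   xi t = t' xi gives P T = T' P.  Expanding the Blanchfield form, xi turns
   phi(b_i, b_k) = (1 - t)((tV - V^T)^-1)_ki into (1 - t)(P^T (tV' - V'^T)^-1 P)_ki,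
   and the difference is (1 - t)(W (tI - T)^-1)_ki with W = P^T V'^-1 P - V^-1
   rational.  Such entries are Laurent only when W = 0, because chi_T is prime to
   t^m (t - 1) (here 1 - T = J V^-1 is invertible).  Hence V' = P V P^T, and P
   is symplectic since V - V^T = V' - V'^T = J. *)

Lemma polyF_Xn_neq0 n : polyF 'X^n != 0.
Proof. by rewrite /polyF tofrac_eq0 monic_neq0 ?monicXn. Qed.

Lemma isLaurent_poly p : isLaurent (polyF p).
Proof. by exists p, 0%N; rewrite expr0 /polyF tofrac1 divr1. Qed.

Lemma isLaurent_ratF r : isLaurent (ratF r).
Proof. exact: isLaurent_poly. Qed.

Lemma isLaurent0 : isLaurent 0.
Proof. by rewrite -(rmorph0 (@tofrac _)); apply: isLaurent_poly. Qed.

Lemma isLaurentD x y : isLaurent x -> isLaurent y -> isLaurent (x + y).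
Proof.
move=> [p [n ->]] [q [m ->]]; exists (p * 'X^m + q * 'X^n), (n + m)%N.
rewrite (addf_div _ _ (polyF_Xn_neq0 n) (polyF_Xn_neq0 m)).
by rewrite /polyF tofracD !tofracM exprD tofracM [_ * tofrac 'X^m]mulrC.
Qed.

Lemma isLaurentN x : isLaurent x -> isLaurent (- x).
Proof. by move=> [p [n ->]]; exists (- p), n; rewrite /polyF tofracN mulNr. Qed.

Lemma isLaurentM x y : isLaurent x -> isLaurent y -> isLaurent (x * y).
Proof.
move=> [p [n ->]] [q [m ->]]; exists (p * q), (n + m)%N.
by rewrite mulf_div /polyF exprD !tofracM.
Qed.

Lemma eqmodL_refl x : eqmodL x x.
Proof. by rewrite /eqmodL subrr; apply: isLaurent0. Qed.

Lemma eqmodL_sym x y : eqmodL x y -> eqmodL y x.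
Proof. by rewrite /eqmodL => /isLaurentN; rewrite opprB. Qed.

Lemma eqmodL_trans x y z : eqmodL x y -> eqmodL y z -> eqmodL x z.
Proof. by rewrite /eqmodL => hxy /(isLaurentD hxy); rewrite addrA subrK. Qed.

Lemma eqmodLD x1 y1 x2 y2 :
  eqmodL x1 y1 -> eqmodL x2 y2 -> eqmodL (x1 + x2) (y1 + y2).
Proof. by rewrite /eqmodL => h1 /(isLaurentD h1); rewrite opprD addrACA. Qed.

Lemma eqmodLM c x y : isLaurent c -> eqmodL x y -> eqmodL (c * x) (c * y).
Proof. by rewrite /eqmodL -mulrBr; apply: isLaurentM. Qed.

Lemma eqmodL_sum (I : Type) (r : seq I) (P : pred I) (F G : I -> Qt) :
  (forall i, P i -> eqmodL (F i) (G i)) ->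
  eqmodL (\sum_(i <- r | P i) F i) (\sum_(i <- r | P i) G i).
Proof.
move=> hFG; elim/big_rec2: _ => [|i x y Pi hxy]; first exact: eqmodL_refl.
exact: eqmodLD (hFG _ Pi) hxy.
Qed.

Section CharPolyMx.
Variable F : fieldType.

(* A constant matrix W can only be a right multiple R (X - S) of the
   characteristic matrix when R = 0: otherwise the degree of R rises by one. *)
Lemma const_eq_mul_char_poly_mx p n (S : 'M[F]_n) (W : 'M[F]_(p, n))
    (R : 'M[{poly F}]_(p, n)) :
  map_mx polyC W = R *m char_poly_mx S -> R = 0.
Proof.
move=> hW.
have hRX k i : R k i * 'X = (W k i)%:P + \sum_l R k l * (S l i)%:P.
  move/matrixP: hW => /(_ k i).
  rewrite /char_poly_mx mulmxBr mul_mx_scalar !mxE => ->.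
  rewrite (eq_bigr (fun l => R k l * (S l i)%:P)) => [|l _]; last by rewrite mxE.
  by rewrite subrK mulrC.
pose s := (\max_(ki : 'I_p * 'I_n) size (R ki.1 ki.2))%N.
have hs ki : (size (R ki.1 ki.2) <= s)%N by apply: (leq_bigmax ki).
suff s0 : s = 0%N.
  apply/matrixP => k i; rewrite mxE; apply/eqP; rewrite -size_poly_eq0 -leqn0.
  by rewrite -s0 (hs (k, i)).
apply/eqP; rewrite -leqn0; apply/negPn/negP; rewrite -ltnNge => s_gt0.
suff : (s <= s.-1)%N by case: (s) s_gt0 => // s' _; rewrite ltnn.
apply/bigmax_leqP => [[k i]] _ /=.
have [->|Rki_nz] := eqVneq (R k i) 0; first by rewrite size_poly0.
rewrite -ltnS prednK // -(size_mulX Rki_nz) hRX.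
apply: (leq_trans (size_polyD _ _)); rewrite geq_max (leq_trans (size_polyC_leq1 _)) //=.
apply: (leq_trans (size_sum _ _ _)); apply/bigmax_leqP => l _.
apply: (leq_trans (size_polyMleq _ _)); apply: (leq_trans _ (hs (k, l))) => /=.
case: (size (S l i)%:P) (size_polyC_leq1 (S l i)) => [|[|//]] _.
  by rewrite addn0 leq_pred.
by rewrite addn1.
Qed.

(* Cramer's rule: W (X - S)^-1 = (W adj(X - S)) / chi_S is a polynomial matrix
   only when W = 0. *)
Lemma char_poly_dvd_adj_eq0 p n (S : 'M[F]_n) (W : 'M[F]_(p, n)) :
  (forall k i, char_poly S %| (map_mx polyC W *m \adj (char_poly_mx S)) k i) ->
  W = 0.
Proof.
set chi := char_poly S; set Q := _ *m _ => chi_dvd.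
have chi_nz : chi != 0 by rewrite monic_neq0 // char_poly_monic.
pose R := map_mx (fun q => q %/ chi) Q.
have hQ : Q = chi *: R.
  by apply/matrixP => k i; rewrite [RHS]mxE [X in _ * X]mxE divpKC.
have hW : map_mx polyC W = R *m char_poly_mx S.
  have : chi *: map_mx polyC W = chi *: (R *m char_poly_mx S).
    by rewrite scalemxAl -hQ /Q -mulmxA mul_adj_mx mul_mx_scalar.
  move/matrixP => hchi; apply/matrixP => k i.
  by move: (hchi k i); rewrite !mxE => /(mulfI chi_nz).
have R0 := const_eq_mul_char_poly_mx hW.
apply/matrixP => k i; move/matrixP: hW => /(_ k i).
by rewrite R0 mul0mx !mxE => /eqP; rewrite polyC_eq0 => /eqP.
Qed.

Lemma char_poly_hornerE n (S : 'M[F]_n) a : (char_poly S).[a] = \det (a%:M - S).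
Proof.
rewrite /char_poly -horner_evalE -det_map_mx; congr (\det _).
by apply/matrixP => i j; rewrite !mxE /= rmorphB rmorphMn /= !horner_evalE hornerX hornerC.
Qed.

Lemma coprimep_char_poly_Xn n (S : 'M[F]_n) m :
  S \in unitmx -> coprimep (char_poly S) 'X^m.
Proof.
move=> S_unit; apply: coprimep_expr; rewrite coprimepX rootE char_poly_hornerE.
rewrite raddf0 sub0r -scaleN1r detZ mulf_neq0 ?expf_neq0 ?oppr_eq0 ?oner_eq0 //.
by rewrite -unitfE -unitmxE.
Qed.

Lemma coprimep_char_poly_X1 n (S : 'M[F]_n) :
  1%:M - S \in unitmx -> coprimep (char_poly S) ('X - 1).
Proof.
by rewrite -polyC1 coprimep_XsubC rootE char_poly_hornerE unitmxE unitfE.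
Qed.

Lemma Xn_const_eq_mul_char_poly_mx p n (S : 'M[F]_n) (W : 'M[F]_(p, n))
    (R : 'M[{poly F}]_(p, n)) m :
  S \in unitmx -> 'X^m *: map_mx polyC W = R *m char_poly_mx S -> W = 0.
Proof.
move=> S_unit hW; apply: (char_poly_dvd_adj_eq0 (S := S)) => k i.
have : 'X^m *: (map_mx polyC W *m \adj (char_poly_mx S)) = char_poly S *: R.
  by rewrite scalemxAl hW -mulmxA mul_mx_adj mul_mx_scalar.
move/matrixP => /(_ k i); rewrite [LHS]mxE [RHS]mxE => hki.
by rewrite -(Gauss_dvdpr _ (coprimep_char_poly_Xn m S_unit)) hki dvdp_mulIl.
Qed.

End CharPolyMx.

HB.instance Definition _ := GRing.RMorphism.copy polyF (@tofrac {poly rat}).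
HB.instance Definition _ := GRing.RMorphism.copy ratF (polyF \o polyC).

Lemma map_ratF_mx m n (M : 'M[rat]_(m, n)) :
  map_mx ratF M = map_mx polyF (map_mx polyC M).
Proof. by rewrite map_mx_comp. Qed.

Definition resolvent n (S : 'M[rat]_n) : 'M[Qt]_n :=
  invmx (map_mx polyF (char_poly_mx S)).

Lemma char_poly_mxF_unit n (S : 'M[rat]_n) : map_mx polyF (char_poly_mx S) \in unitmx.
Proof.
by rewrite unitmxE det_map_mx unitfE /polyF tofrac_eq0 monic_neq0 ?char_poly_monic.
Qed.

Lemma resolventE n (S : 'M[rat]_n) :
  resolvent S = (polyF (char_poly S))^-1 *: map_mx polyF (\adj (char_poly_mx S)).
Proof. by rewrite /resolvent /invmx char_poly_mxF_unit det_map_mx map_mx_adj. Qed.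

Lemma resolvent_intertwine n (S S' P : 'M[rat]_n) :
  P *m S = S' *m P -> resolvent S' *m map_mx ratF P = map_mx ratF P *m resolvent S.
Proof.
move=> PS; set C := map_mx polyF (char_poly_mx S); set C' := map_mx polyF (char_poly_mx S').
have CP : C' *m map_mx ratF P = map_mx ratF P *m C.
  rewrite map_ratF_mx -!map_mxM /char_poly_mx mulmxBl mulmxBr.
  by rewrite mul_scalar_mx mul_mx_scalar -!map_mxM PS.
apply: (canRL (mulmxK (char_poly_mxF_unit S))).
by rewrite -mulmxA -CP mulmxA mulVmx ?char_poly_mxF_unit ?mul1mx.
Qed.

(* The key finiteness argument: if (1 - t) W (tI - S)^-1 has Laurent entries,
   where S and 1 - S are invertible, then W = 0.  Clearing denominators gives
   chi_S | t^m (t - 1) (W adj(tI - S)), and chi_S is prime to t^m (t - 1). *)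
Lemma laurent_resolvent_eq0 p n (S : 'M[rat]_n) (W : 'M[rat]_(p, n)) :
  S \in unitmx -> 1%:M - S \in unitmx ->
  (forall k i, isLaurent ((1 - tF) * (map_mx ratF W *m resolvent S) k i)) ->
  W = 0.
Proof.
move=> S_unit S1_unit hL; apply: (char_poly_dvd_adj_eq0 (S := S)) => k i.
set Q := _ *m _; set chi := char_poly S.
have chiF_nz : polyF chi != 0.
  by rewrite /polyF tofrac_eq0 monic_neq0 ?char_poly_monic.
have [q [m hq]] := hL k i.
have hQ : polyF ((1 - 'X) * Q k i) / polyF chi = polyF q / polyF 'X^m.
  rewrite -hq resolventE map_ratF_mx -scalemxAr -map_mxM -/Q !mxE.
  by rewrite rmorphM rmorphB rmorph1 -/tF -/chi mulrC mulrCA.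
move/eqP: hQ; rewrite (eqr_div _ _ chiF_nz (polyF_Xn_neq0 m)) -!rmorphM.
rewrite /polyF tofrac_eq => /eqP hQ.
have cop : coprimep chi ('X^m * ('X - 1)).
  by rewrite coprimepMr coprimep_char_poly_Xn ?coprimep_char_poly_X1.
rewrite -(Gauss_dvdpr _ cop); apply/dvdpP; exists (- q).
by rewrite mulNr -hQ -mulNr -mulNr opprB [RHS]mulrC mulrA.
Qed.

Lemma invmx_mul (F : fieldType) n (A B : 'M[F]_n) :
  A \in unitmx -> B \in unitmx -> invmx (A *m B) = invmx B *m invmx A.
Proof.
move=> A_unit B_unit; have AB_unit : A *m B \in unitmx by rewrite unitmx_mul A_unit.
have inv_AB : A *m B *m (invmx B *m invmx A) = 1%:M.
  by rewrite mulmxA mulmxK // mulmxV.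
by rewrite -[LHS]mulmx1 -inv_AB mulmxA mulVmx // mul1mx.
Qed.

Lemma seifert_presF_inv g (V : 'M[rat]_(2 * g)) : V \in unitmx ->
  invmx (seifert_presF V) = map_mx ratF (invmx V) *m resolvent (V^T *m invmx V).
Proof.
move=> V_unit.
have -> : seifert_presF V =
    map_mx polyF (char_poly_mx (V^T *m invmx V)) *m map_mx ratF V.
  rewrite map_ratF_mx -map_mxM /char_poly_mx mulmxBl mul_scalar_mx -map_mxM mulmxKV //.
  by apply/matrixP => i j; rewrite !mxE /tF /ratF rmorphB rmorphM.
by rewrite invmx_mul ?char_poly_mxF_unit ?map_unitmx // map_invmx.
Qed.

Lemma sum_mulmx_scale (A : lmodType rat) n m p (X : 'M[rat]_(n, m))
    (Y : 'M[rat]_(m, p)) (v : 'I_n -> A) k :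
  \sum_l (X *m Y) l k *: v l = \sum_j Y j k *: \sum_l X l j *: v l.
Proof.
under eq_bigr do rewrite mxE scaler_suml.
rewrite exchange_big /=; apply: eq_bigr => j _.
by rewrite scaler_sumr; apply: eq_bigr => l _; rewrite scalerA mulrC.
Qed.

Lemma sum_scalar_mx1 (A : lmodType rat) n (v : 'I_n -> A) k :
  \sum_l (1%:M : 'M[rat]_n) l k *: v l = v k.
Proof.
rewrite (bigD1 k) //= mxE eqxx scale1r big1 ?addr0 // => l /negbTE kl.
by rewrite mxE kl scale0r.
Qed.

Lemma Qbasis_coord_uniq (A : lmodType rat) n (b : 'I_n -> A) (c d : 'I_n -> rat) :
  is_Qbasis b -> \sum_i c i *: b i = \sum_i d i *: b i -> c =1 d.
Proof.
move=> [b_free _] cd i; apply/eqP; rewrite -subr_eq0; apply/eqP.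
apply: (b_free (fun i => c i - d i)).
by under eq_bigr do rewrite scalerBl; rewrite sumrB cd subrr.
Qed.

Definition in_span (A : lmodType rat) n (b : 'I_n -> A) (a : A) : Prop :=
  exists c : 'I_n -> rat, a = \sum_i c i *: b i.

Lemma in_span_scale (A : lmodType rat) n (b : 'I_n -> A) r a :
  in_span b a -> in_span b (r *: a).
Proof.
move=> [c ->]; exists (fun i => r * c i).
by rewrite scaler_sumr; apply: eq_bigr => i _; rewrite scalerA.
Qed.

Lemma in_span_sum (A : lmodType rat) n (b : 'I_n -> A) (I : Type) (r : seq I)
    (P : pred I) (F : I -> A) :
  (forall i, P i -> in_span b (F i)) -> in_span b (\sum_(i <- r | P i) F i).
Proof.
move=> hF; elim/big_rec: _ => [|i x Pi [e ->]].
  by exists (fun _ => 0); rewrite big1 // => i _; rewrite scale0r.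
have [d ->] := hF i Pi; exists (fun j => d j + e j).
by rewrite -big_split; apply: eq_bigr => j _; rewrite scalerDl.
Qed.

Lemma in_span_gen (A : lmodType rat) n (b : 'I_n -> A) k : in_span b (b k).
Proof.
exists (fun i => (i == k)%:R); rewrite (bigD1 k) //= eqxx scale1r big1 ?addr0 //.
by move=> i /negbTE ->; rewrite scale0r.
Qed.

Lemma peval_pad (A : lmodType rat) (t : A -> A) (p : {poly rat}) (a : A) k :
  (size p <= k)%N -> peval t p a = \sum_(i < k) p`_i *: iter i t a.
Proof.
move=> hk; rewrite /peval (big_ord_widen k (fun i => p`_i *: iter i t a) hk).
rewrite big_mkcond /=; apply: eq_bigr => i _; case: ltnP => // /(nth_default 0) ->.
by rewrite scale0r.
Qed.

Lemma peval_C (A : lmodType rat) (t : A -> A) c a : peval t c%:P a = c *: a.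
Proof. by rewrite (@peval_pad _ _ _ _ 1) ?size_polyC_leq1 // big_ord1 coefC. Qed.

Lemma peval_linear (A : lmodType rat) (t : A -> A) u v a :
  peval t (u *: 'X - v%:P) a = u *: t a - v *: a.
Proof.
rewrite (@peval_pad _ _ _ _ 2); last first.
  rewrite (leq_trans (size_polyD _ _)) // geq_max size_polyN.
  rewrite (leq_trans (size_polyC_leq1 _)) //.
  by rewrite (leq_trans (size_scale_leq _ _)) ?size_polyX.
rewrite big_ord_recr big_ord1 /= !coefB !coefZ !coefC !coefX /=.
by rewrite mulr0 sub0r mulr1 subr0 scaleNr addrC.
Qed.

Section AlexanderPresentation.
Variables (g : nat) (V : 'M[rat]_(2 * g)) (A : lmodType rat).
Variables (t : {linear A -> A}) (tinv : A -> A) (b : 'I_(2 * g) -> A).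
Hypotheses (V_unit : V \in unitmx) (hpres : alex_presentation V t tinv b).

(* The matrix of t on the generators: the j-th relation reads
   sum_i V_ij t(b_i) = sum_i V_ji b_i, i.e. t acts through V^T V^-1. *)
Definition monodromy := V^T *m invmx V.

Lemma monodromy_unit : monodromy \in unitmx.
Proof. by rewrite unitmx_mul unitmx_tr unitmx_inv V_unit. Qed.

Lemma presentation_action k : t (b k) = \sum_l monodromy l k *: b l.
Proof.
have [_ _ _ rel] := hpres.
have relj j : \sum_i V i j *: t (b i) = \sum_l V^T l j *: b l.
  have : \sum_i peval t (V i j *: 'X - (V j i)%:P) (b i) = 0.
    apply/(rel (fun i => V i j *: 'X - (V j i)%:P)).
    exists 0%N, (fun l => (l == j)%:R) => i.
    rewrite expr0 mul1r (bigD1 j) //= eqxx mulr1 big1 ?addr0 // => l /negbTE ->.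
    by rewrite mulr0.
  under eq_bigr do rewrite peval_linear.
  rewrite sumrB => /eqP; rewrite subr_eq0 => /eqP ->.
  by apply: eq_bigr => l _; rewrite mxE.
rewrite sum_mulmx_scale; under eq_bigr do rewrite -relj.
by rewrite -(sum_mulmx_scale V (invmx V) (fun i => t (b i))) mulmxV // sum_scalar_mx1.
Qed.

(* A rational relation sum_i c_i b_i = 0 would give t^m c = (tV - V^T) d over
   Q[t]; transposing, t^m c^T = (d^T V^T)(tI - monodromy^T), forcing c = 0. *)
Lemma presentation_free (c : 'I_(2 * g) -> rat) :
  \sum_i c i *: b i = 0 -> forall i, c i = 0.
Proof.
have [_ _ _ rel] := hpres; move=> hc.
have [m [d hd]] : exists m d,
    forall i, 'X^m * (c i)%:P = \sum_j (V i j *: 'X - (V j i)%:P) * d j.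
  by apply/(rel (fun i => (c i)%:P)); under eq_bigr do rewrite peval_C.
suff /matrixP c0 : \row_i c i = 0 :> 'rV[rat]_(2 * g).
  by move=> i; have := c0 0 i; rewrite !mxE.
apply: (Xn_const_eq_mul_char_poly_mx (S := monodromy^T) (m := m)
          (R := \row_l d l *m map_mx polyC V^T)).
  by rewrite unitmx_tr monodromy_unit.
have VmT : V^T *m monodromy^T = V.
  by rewrite /monodromy trmx_mul trmxK trmx_inv mulmxA mulmxV ?unitmx_tr // mul1mx.
rewrite -mulmxA /char_poly_mx mulmxBr mul_mx_scalar -map_mxM VmT.
apply/matrixP => z i; rewrite (ord1 z) !mxE hd; apply: eq_bigr => j _.
by rewrite !mxE mulrC -mul_polyC [_%:P * _]mulrC.
Qed.

(* Both t and its inverse preserve the Q-span of the generators, and the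
   generators span A as a Q[t^{+-1}]-module; hence they span A over Q. *)
Lemma presentation_span a : in_span b a.
Proof.
have [_ tinvK gen _] := hpres.
have comb_span (c : 'I_(2 * g) -> rat) : in_span b (\sum_i c i *: b i).
  by apply: in_span_sum => i _; apply/in_span_scale/in_span_gen.
have t_span x : in_span b x -> in_span b (t x).
  move=> [c ->]; rewrite linear_sum; apply: in_span_sum => i _.
  by rewrite linearZ /= presentation_action; apply/in_span_scale/comb_span.
pose y j := \sum_k invmx monodromy k j *: b k.
have ty j : t (y j) = b j.
  rewrite /y linear_sum; under eq_bigr do rewrite linearZ /= presentation_action.
  by rewrite -sum_mulmx_scale mulmxV ?monodromy_unit // sum_scalar_mx1.
have tinv_span x : in_span b x -> in_span b (tinv x).
  move=> [c ->]; rewrite (eq_bigr (fun i => t (c i *: y i))) => [|i _]; last first.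
    by rewrite linearZ /= ty.
  rewrite -linear_sum tinvK.
  by apply: in_span_sum => i _; apply/in_span_scale/comb_span.
have iter_span (f : A -> A) m x :
    (forall z, in_span b z -> in_span b (f z)) -> in_span b x -> in_span b (iter m f x).
  by move=> hf hx; elim: m => //= m IH; apply: hf.
have [c [m ->]] := gen a; apply: (iter_span) => //.
apply: in_span_sum => i _; apply: in_span_sum => j _.
by apply/in_span_scale/iter_span/in_span_gen.
Qed.

Lemma presentation_basis : is_Qbasis b.
Proof. by split; [exact: presentation_free | exact: presentation_span]. Qed.

End AlexanderPresentation.

Section BilinearModLaurent.
Variables (A : lmodType rat) (phi : A -> A -> Qt).
Hypotheses
  (phiDl : forall a1 a2 c, eqmodL (phi (a1 + a2) c) (phi a1 c + phi a2 c))
  (phiZl : forall r a c, eqmodL (phi (r *: a) c) (ratF r * phi a c))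
  (phiDr : forall a c1 c2, eqmodL (phi a (c1 + c2)) (phi a c1 + phi a c2))
  (phiZr : forall r a c, eqmodL (phi a (r *: c)) (ratF r * phi a c)).

Lemma phi_suml n (F : 'I_n -> rat) (v : 'I_n -> A) c :
  eqmodL (phi (\sum_l F l *: v l) c) (\sum_l ratF (F l) * phi (v l) c).
Proof.
elim/big_rec2: _ => [|l x y _ IH].
  by have := phiZl 0 0 c; rewrite scale0r rmorph0 mul0r.
exact: eqmodL_trans (phiDl _ _ _) (eqmodLD (phiZl _ _ _) IH).
Qed.

Lemma phi_sumr n (F : 'I_n -> rat) (v : 'I_n -> A) a :
  eqmodL (phi a (\sum_l F l *: v l)) (\sum_l ratF (F l) * phi a (v l)).
Proof.
elim/big_rec2: _ => [|l x y _ IH].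
  by have := phiZr 0 a 0; rewrite scale0r rmorph0 mul0r.
exact: eqmodL_trans (phiDr _ _ _) (eqmodLD (phiZr _ _ _) IH).
Qed.

Lemma phi_gram n (P : 'M[rat]_n) (v : 'I_n -> A) (c : Qt) (G : 'M[Qt]_n) :
  (forall l m, eqmodL (phi (v l) (v m)) (c * G m l)) ->
  forall i k, eqmodL (phi (\sum_l P l i *: v l) (\sum_m P m k *: v m))
                     (c * (map_mx ratF P^T *m G *m map_mx ratF P) k i).
Proof.
move=> hG i k; apply: eqmodL_trans (phi_suml _ _ _) _.
have -> : c * (map_mx ratF P^T *m G *m map_mx ratF P) k i =
    \sum_l ratF (P l i) * \sum_m ratF (P m k) * (c * G m l).
  rewrite mxE mulr_sumr; apply: eq_bigr => l _.
  rewrite mxE mulr_suml !mulr_sumr; apply: eq_bigr => m _; rewrite !mxE; ring.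
apply: eqmodL_sum => l _; apply: eqmodLM; first exact: isLaurent_ratF.
apply: eqmodL_trans (phi_sumr _ _ _) _; apply: eqmodL_sum => m _.
by apply: eqmodLM; [exact: isLaurent_ratF | exact: hG].
Qed.

End BilinearModLaurent.

Definition partner (i : nat) : nat := if odd i then i.-1 else i.+1.

Lemma partnerK i : partner (partner i) = i.
Proof.
by rewrite /partner; case: i => [|i] //=; case i_odd: (odd i) => /=; rewrite i_odd.
Qed.

Lemma odd_partner i : odd (partner i) = ~~ odd i.
Proof.
by rewrite /partner; case: i => [|i] //=; case i_odd: (odd i) => /=; rewrite i_odd.
Qed.

Lemma partner_lt g (i : 'I_(2 * g)) : (partner i < 2 * g)%N.
Proof.
rewrite /partner; case: ifP => [_|i_even]; first exact: leq_ltn_trans (leq_pred _) _.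
move: (ltn_ord i); rewrite leq_eqVlt => /orP [/eqP i2g|//].
by move: (congr1 odd i2g); rewrite /= oddM /= i_even.
Qed.

Lemma JmxE g (i j : 'I_(2 * g)) :
  Jmx g i j = if val j == partner i then (if odd i then 1 else -1) else 0.
Proof.
rewrite /Jmx mxE /partner; case: i => [[|i]] hi /=; first by case: (val j == 1)%N.
by case: (odd i) => /=; [case: (val j == i.+2) | rewrite eqSS].
Qed.

Lemma Jmx_sqr g : Jmx g *m Jmx g = - 1%:M.
Proof.
apply/matrixP => i k; rewrite !mxE (bigD1 (Ordinal (partner_lt i))) //= big1 ?addr0.
  rewrite !JmxE /= eqxx partnerK odd_partner eq_sym (inj_eq val_inj).
  by case: eqP => [->|_]; case: (odd k); rewrite ?mulr0 ?mulN1r ?mulr1 ?oppr0.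
move=> j /eqP j_partner; rewrite JmxE; case: eqP => [j_eq|]; last by rewrite mul0r.
by case: j_partner; apply: val_inj.
Qed.

Lemma Jmx_unit g : Jmx g \in unitmx.
Proof.
have JJN : Jmx g *m (- Jmx g) = 1%:M by rewrite mulmxN Jmx_sqr opprK.
by case: (mulmx1_unit JJN).
Qed.

(* 1 - V^T V^-1 = (V - V^T) V^-1 = J V^-1 is invertible. *)
Lemma one_sub_monodromy_unit g (V : 'M[rat]_(2 * g)) :
  V \in unitmx -> V - V^T = Jmx g -> 1%:M - monodromy V \in unitmx.
Proof.
move=> V_unit VJ.
by rewrite /monodromy -(mulmxV V_unit) -mulmxBl VJ unitmx_mul Jmx_unit unitmx_inv.
Qed.

Lemma intertwined_matrices (A A' : lmodType rat) n (xi : {linear A -> A'})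
    (t : A -> A) (t' : {linear A' -> A'}) (b : 'I_n -> A) (b' : 'I_n -> A')
    (T T' P : 'M[rat]_n) :
  is_Qbasis b' -> (forall a, xi (t a) = t' (xi a)) ->
  (forall k, t (b k) = \sum_l T l k *: b l) ->
  (forall k, t' (b' k) = \sum_l T' l k *: b' l) ->
  (forall i, xi (b i) = \sum_k P k i *: b' k) ->
  P *m T = T' *m P.
Proof.
move=> bas' xi_t tb t'b' xib; apply/matrixP => l i.
apply: (Qbasis_coord_uniq (c := fun l => (P *m T) l i) (d := fun l => (T' *m P) l i) bas').
rewrite sum_mulmx_scale sum_mulmx_scale.
transitivity (xi (t (b i))).
  by rewrite tb linear_sum; apply: eq_bigr => j _; rewrite linearZ xib.
rewrite xi_t xib linear_sum; apply: eq_bigr => j _.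
by rewrite linearZ t'b'.
Qed.

Lemma congruence_from_inverses (F : fieldType) n (P V V' : 'M[F]_n) :
  V \in unitmx -> V' \in unitmx -> P^T *m invmx V' *m P = invmx V ->
  V' = P *m V *m P^T.
Proof.
move=> V_unit V'_unit PVP.
have P_unit : P \in unitmx.
  have : invmx V \in unitmx by rewrite unitmx_inv.
  by rewrite -PVP unitmx_mul => /andP [].
have PVPV'P : P *m V *m P^T *m invmx V' *m P = P.
  by rewrite -mulmxA -mulmxA (mulmxA P^T) PVP mulmxK.
have PVPV' : P *m V *m P^T *m invmx V' = 1%:M.
  by rewrite -[LHS](mulmxK P_unit) PVPV'P mulmxV.
by rewrite -[RHS](mulmxKV V'_unit) PVPV' mul1mx.
Qed.

Lemma symplectic_congruence g (P V V' : 'M[rat]_(2 * g)) :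
  V - V^T = Jmx g -> V' - V'^T = Jmx g -> V' = P *m V *m P^T -> symplectic P.
Proof.
move=> VJ V'J V'E; rewrite /symplectic -{1}VJ -V'J V'E mulmxBr mulmxBl.
by rewrite !trmx_mul trmxK !mulmxA.
Qed.

Lemma seifert_gram_difference g (P V V' : 'M[rat]_(2 * g)) :
  V \in unitmx -> V' \in unitmx -> P *m monodromy V = monodromy V' *m P ->
  map_mx ratF P^T *m invmx (seifert_presF V') *m map_mx ratF P - invmx (seifert_presF V) =
  map_mx ratF (P^T *m invmx V' *m P - invmx V) *m resolvent (monodromy V).
Proof.
move=> V_unit V'_unit PT; rewrite !seifert_presF_inv //.
by rewrite -!mulmxA (resolvent_intertwine PT) map_mxB !map_mxM mulmxBl !mulmxA.
Qed.

Unset Implicit Arguments.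
Set Strict Implicit.

Theorem mainTheorem10 (g : nat)
    (V V' : 'M[rat]_(2 * g))
    (A A' : lmodType rat)
    (t : {linear A -> A}) (tinv : A -> A)
    (t' : {linear A' -> A'}) (tinv' : A' -> A')
    (b : 'I_(2 * g) -> A) (b' : 'I_(2 * g) -> A')
    (phi : A -> A -> Qt) (phi' : A' -> A' -> Qt)
    (xi : {linear A -> A'})
    (hVJ : V - V^T = Jmx g) (hVJ' : V' - V'^T = Jmx g)
    (hpres : alex_presentation V t tinv b)
    (hpres' : alex_presentation V' t' tinv' b')
    (hphi : blanchfield_on_gens V t b phi)
    (hphi' : blanchfield_on_gens V' t' b' phi')
    (hxi_t : forall a, xi (t a) = t' (xi a))
    (hxi_bij : bijective xi)
    (hxi_pres : forall a c, eqmodL (phi' (xi a) (xi c)) (phi a c))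
    (hV : V \in unitmx) (hV' : V' \in unitmx) :
  is_Qbasis b /\ is_Qbasis b' /\
  (forall P : 'M[rat]_(2 * g),
     (forall i, xi (b i) = \sum_k P k i *: b' k) ->
     symplectic P /\ V' = P *m V *m P^T).
Proof.
have bas' := presentation_basis hV' hpres'.
split; first exact: presentation_basis hV hpres.
split=> // P hP.
have PT : P *m monodromy V = monodromy V' *m P.
  exact: intertwined_matrices bas' hxi_t (presentation_action hV hpres)
           (presentation_action hV' hpres') hP.
(* xi preserves the form, so the Gram matrices of phi' on the xi(b_i) and of phi
   on the b_i agree modulo Q[t^{+-1}]. *)
have [_ [_ _ _ gens]] := hphi.
have [[phiDl' phiZl' _] [phiDr' phiZr' _ gens']] := hphi'.
have W_laurent k i : isLaurent ((1 - tF) *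
    (map_mx ratF (P^T *m invmx V' *m P - invmx V) *m resolvent (monodromy V)) k i).
  rewrite -(seifert_gram_difference hV hV' PT).
  set G' := map_mx ratF P^T *m _ *m _; set G := invmx (seifert_presF V).
  have -> : (G' - G) k i = G' k i - G k i by rewrite !mxE.
  rewrite mulrBr.
  apply: eqmodL_trans (eqmodL_sym _) (eqmodL_trans (hxi_pres _ _) (gens i k)).
  by rewrite !hP; apply: phi_gram.
have W0 := laurent_resolvent_eq0 (monodromy_unit hV)
             (one_sub_monodromy_unit hV hVJ) W_laurent.
have V'E : V' = P *m V *m P^T.
  by apply: congruence_from_inverses hV hV' _; apply/eqP; rewrite -subr_eq0 W0.
by split=> //; apply: symplectic_congruence hVJ hVJ' V'E.
Qed.
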